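(* Let $(X,T)$ be a CAM $G$-system and let $H$ be a finite index normal subgroup of $G$, with left cosets $g_1H,\dots,g_mH$. Suppose $Y\subseteq X$ is a compact $H$-invariant subset containing a point whose $H$-orbit is infinite. Then $\bigcup_{i=1}^m T_{g_i}(Y)=X$, and the points of $Y$ with finite $H$-orbit are dense in $Y$.
   Context: Let $G$ be a countable discrete group. A topological $G$-system $(X,T)$ consists of a compact metric space $X$ and an action $T\colon G\to\mathrm{Homeo}(X)$, $g\mapsto T_g$. The system is topologically transitive if for all nonempty open $U,V\subseteq X$ there is $g\in G$ with $T_gU\cap V\neq\emptyset$; the action is faithful if $T_g=\mathrm{id}_X$ only when $g$ is the identity. A point is periodic if its $G$-orbit is finite. The system is chaotic almost minimal (CAM) if: (1) it is topologically transitive and the action is faithful; (2) the periodic points are dense in $X$; (3) every proper closed $T$-invariant subset of $X$ is finite. *)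

From HB Require Import structures.
From mathcomp Require Import all_boot monoid.
From mathcomp Require Import all_classical all_reals topology.

Set Implicit Arguments.
Unset Strict Implicit.
Unset Printing Implicit Defensive.

Local Open Scope classical_set_scope.
Local Open Scope group_scope.

Section Dyn.
Variables (G : groupType) (X : topologicalType).

Definition is_action (T : G -> X -> X) : Prop :=
  (forall g, continuous (T g)) /\
  (forall x, T 1 x = x) /\
  (forall g h x, T (g * h) x = T g (T h x)).

Definition faithful_action (T : G -> X -> X) : Prop :=
  forall g, (forall x, T g x = x) -> g = 1.

Definition orbit_in (T : G -> X -> X) (S : set G) (x : X) : set X :=
  [set T g x | g in S].

Definition periodic (T : G -> X -> X) (x : X) : Prop :=
  finite_set (orbit_in T [set: G] x).

Definition topologically_transitive (T : G -> X -> X) : Prop :=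
  forall U V : set X, open U -> open V -> U !=set0 -> V !=set0 ->
    exists g, (T g @` U) `&` V !=set0.

Definition invariant_under (T : G -> X -> X) (S : set G) (A : set X) : Prop :=
  forall g, S g -> T g @` A `<=` A.

Definition CAM (T : G -> X -> X) : Prop :=
  [/\ topologically_transitive T /\ faithful_action T,
      closure (periodic T) = [set: X] &
      forall A : set X, closed A -> invariant_under T [set: G] A ->
        A != [set: X] -> finite_set A].

Definition is_subgroup (H : set G) : Prop :=
  H 1 /\ (forall x y, H x -> H y -> H (x * y^-1)).

Definition is_normal (H : set G) : Prop :=
  forall g h, H h -> H (g^-1 * h * g).

Definition left_coset_reps (H : set G) (m : nat) (r : 'I_m -> G) : Prop :=
  forall x : G, exists! i : 'I_m, exists2 h, H h & x = r i * h.

End Dyn.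

(* The translates of Y by the coset representatives form a closed G-invariant
   set containing an infinite set, so by almost minimality they cover X.
   Applying this to the orbit closure O of a point y of Y with infinite
   H-orbit, finitely many closed sets cover X, hence some translate of O, and
   so O itself, has nonempty interior. As O is the closure of an H-orbit and
   H acts by homeomorphisms, O is then a neighbourhood of y contained in Y,
   and periodic points (dense in X, with finite H-orbits) accumulate at y. *)
From HB Require Import structures.
From mathcomp Require Import all_boot monoid.
From mathcomp Require Import all_classical all_reals topology.

Set Implicit Arguments.
Unset Strict Implicit.

Local Open Scope classical_set_scope.

Lemma closed_cover_open_subset (X : topologicalType) (I : eqType)
    (F : I -> set X) (s : seq I) (W : set X) :
  (forall i, closed (F i)) -> open W -> W !=set0 ->
  W `<=` [set x | exists2 i, i \in s & F i x] ->
  exists i W', [/\ open W', W' !=set0 & W' `<=` F i].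
Proof.
move=> cF; elim: s W => [|i s IH] W oW [w Ww] sub.
  by have [i] := sub w Ww.
have [[v [Wv nFv]]|WF] := pselect ((W `&` ~` F i) !=set0).
  apply: (IH (W `&` ~` F i)); first by apply: openI => //; rewrite openC.
    by exists v.
  move=> x [Wx nFx]; have [j] := sub x Wx.
  by rewrite in_cons => /orP[/eqP ->|js] Fjx //; exists j.
exists i, W; split => //; first by exists w.
by move=> x Wx; apply: contra_notP WF => nFx; exists x.
Qed.

Section Subgroup.
Local Open Scope group_scope.
Variables (G : groupType) (H : set G).
Hypothesis hH : is_subgroup H.

Lemma subgroupV h : H h -> H h^-1.
Proof. by case: hH => H1 HM Hh; have := HM 1 h H1 Hh; rewrite mul1g. Qed.

Lemma subgroupM g h : H g -> H h -> H (g * h).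
Proof.
by case: hH => _ HM Hg Hh; have := HM g _ Hg (subgroupV Hh); rewrite invgK.
Qed.

End Subgroup.

Section Action.
Local Open Scope group_scope.
Variables (X : topologicalType) (G : groupType) (T : G -> X -> X).
Hypothesis hT : is_action T.

Lemma actK g : cancel (T g) (T g^-1).
Proof. by case: hT => _ [h1 hM] x; rewrite -hM mulVg h1. Qed.

Lemma actKV g : cancel (T g^-1) (T g).
Proof. by case: hT => _ [h1 hM] x; rewrite -hM mulgV h1. Qed.

Lemma image_actE g A : T g @` A = T g^-1 @^-1` A.
Proof.
apply/seteqP; split => x /=; first by case=> a Aa <-; rewrite actK.
by move=> Ax; exists (T g^-1 x); rewrite ?actKV.
Qed.

Lemma closed_image_act g A : closed A -> closed (T g @` A).
Proof.
rewrite image_actE; case: hT => hc _.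
by move: (hc g^-1) => /continuous_closedP; apply.
Qed.

Lemma open_image_act g A : open A -> open (T g @` A).
Proof.
rewrite image_actE; case: hT => hc _ oA.
by apply: open_comp => // x _; apply: hc.
Qed.

Lemma closure_invariant S A :
  invariant_under T S A -> invariant_under T S (closure A).
Proof.
move=> iA g Sg _ [x clAx <-] B /(proj1 hT g x) /clAx [a [Aa Ba]].
by exists (T g a); split => //; apply: (iA g Sg); exists a.
Qed.

Lemma orbit_in_sub S A y :
  invariant_under T S A -> A y -> orbit_in T S y `<=` A.
Proof. by move=> iA Ay _ [g Sg <-]; apply: (iA g Sg); exists y. Qed.

Lemma periodic_orbit_in_finite S x :
  periodic T x -> finite_set (orbit_in T S x).
Proof. by apply: sub_finite_set => _ [g _ <-]; exists g. Qed.

Variable H : set G.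
Hypothesis hH : is_subgroup H.

Lemma orbit_in_id y : orbit_in T H y y.
Proof. by exists 1; [case: hH | case: hT => _ []]. Qed.

Lemma orbit_in_invariant y : invariant_under T H (orbit_in T H y).
Proof.
move=> g Hg _ [_ [h Hh <-] <-]; exists (g * h); first exact: subgroupM.
by case: hT => _ [_ ->].
Qed.

Lemma coset_translates_invariant m (r : 'I_m -> G) C :
  left_coset_reps H r -> invariant_under T H C ->
  invariant_under T [set: G] (\bigcup_(i in [set: 'I_m]) (T (r i) @` C)).
Proof.
move=> hr iC g _ _ [x [i _ [c Cc <-]] <-].
have [j [[h Hh grh] _]] := hr (g * r i).
exists j => //; exists (T h c); first by apply: (iC h Hh); exists c.
by case: hT => _ [_ hM]; rewrite -hM -grh hM.
Qed.

(* An open set inside the closure of an H-orbit meets the orbit; pulling it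
   back along the element of H that lands there gives a neighbourhood of y. *)
Lemma orbit_closure_nbhs y V :
  open V -> V !=set0 -> V `<=` closure (orbit_in T H y) ->
  nbhs y (closure (orbit_in T H y)).
Proof.
move=> oV [v Vv] VO.
have [_ [[h Hh <-] Vhy]] := VO v Vv V (open_nbhs_nbhs (conj oV Vv)).
apply: (@filterS _ _ _ (T h^-1 @` V)).
  move=> _ [x Vx <-].
  apply: (closure_invariant (@orbit_in_invariant y) (subgroupV hH Hh)).
  by exists x => //; apply: VO.
apply: open_nbhs_nbhs; split; first exact: open_image_act.
by exists (T h y); rewrite ?actK.
Qed.

End Action.

Section CAM.
Local Open Scope group_scope.
Variables (X : topologicalType) (G : groupType) (T : G -> X -> X).
Hypotheses (hT : is_action T) (hC : CAM T).
Variables (H : set G) (m : nat) (r : 'I_m -> G).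
Hypothesis hr : left_coset_reps H r.

Lemma CAM_coset_cover C :
  closed C -> invariant_under T H C ->
  (exists2 y, C y & ~ finite_set (orbit_in T H y)) ->
  \bigcup_(i in [set: 'I_m]) (T (r i) @` C) = [set: X].
Proof.
move=> cC iC [y Cy infy]; case: hC => _ _ almost_minimal.
set Z := \bigcup_(i in [set: 'I_m]) (T (r i) @` C).
have cZ : closed Z.
  apply: closed_bigcup; first exact: finite_finset.
  by move=> i _; apply: closed_image_act.
have iZ := coset_translates_invariant hT hr iC.
apply/eqP; apply: contra_notT infy => /(almost_minimal Z cZ iZ).
have [i _] := hr 1.
move=> /(finite_image (T (r i)^-1)); apply: sub_finite_set.
move=> x /(orbit_in_sub iC Cy) Cx.
by exists (T (r i) x); rewrite ?actK //; exists i => //; exists x.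
Qed.

Lemma CAM_infinite_orbit_nbhs y :
  is_subgroup H -> ~ finite_set (orbit_in T H y) ->
  nbhs y (closure (orbit_in T H y)).
Proof.
move=> hH infy; set O := closure (orbit_in T H y).
have cO : closed O := @closed_closure _ _.
have iO : invariant_under T H O.
  by apply/(closure_invariant hT)/orbit_in_invariant.
have Oy : O y by apply/subset_closure/orbit_in_id.
have cov :
    [set: X] `<=` [set x | exists2 i, i \in enum 'I_m & (T (r i) @` O) x].
  move=> x _; have [i _ Fx] : (\bigcup_(i in [set: 'I_m]) (T (r i) @` O)) x.
    by rewrite (CAM_coset_cover cO iO (ex_intro2 _ _ y Oy infy)).
  by exists i; rewrite ?mem_enum.
have [i [W [oW [w Ww] WO]]] := closed_cover_open_subset
  (fun i => @closed_image_act _ _ _ hT (r i) _ cO) openT (ex_intro _ y I) cov.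
apply: (orbit_closure_nbhs hT hH (open_image_act hT (r i)^-1 oW)).
  by exists (T (r i)^-1 w), w.
by move=> _ [x /WO [o Oo <-] <-]; rewrite actK.
Qed.

End CAM.

Theorem lemma3p2 (R : realType) (X : metricType R) (G : groupType)
  (T : G -> X -> X) (H : set G) (m : nat) (r : 'I_m -> G) (Y : set X) :
  countable [set: G] ->
  compact [set: X] ->
  is_action T ->
  CAM T ->
  is_subgroup H -> is_normal H ->
  left_coset_reps H r ->
  compact Y ->
  invariant_under T H Y ->
  (exists2 y, Y y & ~ finite_set (orbit_in T H y)) ->
  \bigcup_(i in [set: 'I_m]) (T (r i) @` Y) = [set: X] /\
  Y `<=` closure (Y `&` [set y | finite_set (orbit_in T H y)]).
Proof.
move=> _ _ hT hC hH _ hr kY iY exy.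
have cY : closed Y by apply: compact_closed => //; apply: metric_hausdorff.
split; first exact: CAM_coset_cover.
move=> y Yy; have [fy|infy] := pselect (finite_set (orbit_in T H y)).
  by apply: subset_closure.
have OY : closure (orbit_in T H y) `<=` Y.
  by rewrite (closure_id Y).1 //; apply: closureS; apply: orbit_in_sub.
have dP : closure (periodic T) y by case: hC => _ ->.
move=> B nB; have /dP [p [Pp [Bp Op]]] : nbhs y (B `&` closure (orbit_in T H y)).
  by apply: filterI => //; apply: CAM_infinite_orbit_nbhs.
by exists p; split => //; split; [exact: OY | exact: periodic_orbit_in_finite].
Qed.
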